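(* Let $L$ be a link that is not an unlink. Then for every even $n \ge 2$, $\beta_n(L) \le \beta_{3n+1}(L)$.
   Context: An $n$-crossing ($n\ge 2$) in a link projection is a point where $n$ strands meet, each bisecting the crossing, with the strands assigned distinct levels $1,\dots,n$ (level $1$ on top) recording their heights. An $m$-string $n$-crossing braid is a braid diagram on $m$ strings all of whose crossings are $n$-crossings; each such crossing involves strings in consecutive positions $j,\dots,j+n-1$ and reverses their order. The $n$-crossing braid index $\beta_n(L)$ is the minimum number of strings of an $n$-crossing braid whose closure is isotopic to $L$, with $\beta_n(L)=\infty$ if none exists. *)

(* Combinatorial model of links via braid
   closures: a link is represented by a braid (m strands, word w); two braid
   closures are isotopic iff the braids are Markov-equivalent (Alexander and
   Markov theorems). *)
From mathcomp Require Import all_boot.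
Set Implicit Arguments. Unset Strict Implicit. Unset Printing Implicit Defensive.

(* A generator (i, true) is sigma_i (crossing of the strands in positions
   i and i+1, 0-based, left strand over); (i, false) is sigma_i^{-1}. *)
Definition gen := (nat * bool)%type.

Definition braid_wf (m : nat) (w : seq gen) : bool :=
  all (fun g : gen => g.1.+1 < m) w.

Inductive braid_rel : seq gen -> seq gen -> Prop :=
| br_cancel i e : braid_rel [:: (i, e); (i, ~~ e)] [::]
| br_far i k e f : i.+1 < k -> braid_rel [:: (i, e); (k, f)] [:: (k, f); (i, e)]
| br_braid i : braid_rel [:: (i, true); (i.+1, true); (i, true)]
                         [:: (i.+1, true); (i, true); (i.+1, true)].

Inductive markov : nat -> seq gen -> nat -> seq gen -> Prop :=
| mk_refl m w : markov m w m w
| mk_sym m w m' w' : markov m w m' w' -> markov m' w' m w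
| mk_trans m w m' w' m'' w'' :
    markov m w m' w' -> markov m' w' m'' w'' -> markov m w m'' w''
| mk_rel m u l r v : braid_wf m (u ++ l ++ v) -> braid_wf m (u ++ r ++ v) ->
    braid_rel l r -> markov m (u ++ l ++ v) m (u ++ r ++ v)
| mk_conj m g w : braid_wf m (g :: w) -> markov m (g :: w) m (rcons w g)
| mk_stab m w e : 0 < m -> braid_wf m w -> markov m w m.+1 (rcons w (m.-1, e)).

Definition is_unlink (m0 : nat) (w0 : seq gen) : Prop :=
  exists2 k, 0 < k & markov k [::] m0 w0.

(* Expansion of a multi-crossing into classical crossings.  The strands in
   positions j, j+1, ..., j+n-1 have levels s`_0, ..., s`_(n-1) (level 1 on
   top); the crossing reverses their order, each pair crossing once, with the
   lower-level (higher) strand over. *)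
Fixpoint bubble (j : nat) (a : nat) (s : seq nat) : seq gen :=
  match s with
  | [::] => [::]
  | b :: s' => (j, a < b) :: bubble j.+1 a s'
  end.

Fixpoint mcross_word (j : nat) (s : seq nat) : seq gen :=
  match s with
  | [::] => [::]
  | a :: s' => bubble j a s' ++ mcross_word j s'
  end.

Definition valid_ncross (n m : nat) (c : nat * seq nat) : bool :=
  (c.1 + n <= m) && perm_eq c.2 (iota 1 n).

Definition ncb_word (cs : seq (nat * seq nat)) : seq gen :=
  flatten [seq mcross_word c.1 c.2 | c <- cs].

Definition ncb_closure (n m : nat) (m0 : nat) (w0 : seq gen) : Prop :=
  exists cs : seq (nat * seq nat),
    [/\ 0 < m, all (valid_ncross n m) cs & markov m (ncb_word cs) m0 w0].

From mathcomp Require Import all_boot zify.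
Set Implicit Arguments. Unset Strict Implicit. Unset Printing Implicit Defensive.

(* Write n = 2h and label the strands entering a multi-crossing by their levels.
   Expanded into classical crossings, a multi-crossing is a descending word: each
   classical crossing puts the strand with the smaller label on top, and the word
   reverses the labels.  Two descending words that start from the same distinct labels
   and end with the same labelling are equal in the braid group, since each of them,
   followed by the combing word of the final labelling (pull the smallest label to the
   front over all other strands, then comb the rest), equals the combing word of the
   initial labelling.
   Cut the 6h+1 strands of a (3n+1)-crossing into five blocks of h strands and a last
   block of h+1.  Five passes, each carrying the front block to the back by reversals of
   2h consecutive strands, reverse the whole sequence.  Realising every such reversal by
   a 2h-crossing whose levels are the current ranks of the labels yields a descending word
   with the same final labelling, that is, an n-crossing braid on the same strings whose
   closure is isotopic to the original one. *)

Inductive braid_eq (m : nat) : seq gen -> seq gen -> Prop :=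
| braid_eq_refl w : braid_eq m w w
| braid_eq_sym u v : braid_eq m u v -> braid_eq m v u
| braid_eq_trans u v w : braid_eq m u v -> braid_eq m v w -> braid_eq m u w
| braid_eq_rel u l r v : braid_wf m (u ++ l ++ v) -> braid_wf m (u ++ r ++ v) ->
    braid_rel l r -> braid_eq m (u ++ l ++ v) (u ++ r ++ v).

Lemma braid_eq_markov m u v : braid_eq m u v -> markov m u m v.
Proof.
elim=> {u v} [w|u v _|u v w _ IHuv _ IHvw|u l r v wl wr lr].
- exact: mk_refl.
- exact: mk_sym.
- exact: mk_trans IHuv IHvw.
- exact: mk_rel.
Qed.

Lemma braid_wf_cat m u v : braid_wf m (u ++ v) = braid_wf m u && braid_wf m v.
Proof. exact: all_cat. Qed.

Lemma braid_wf_widen m m' w : m <= m' -> braid_wf m w -> braid_wf m' w.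
Proof. by move=> le_mm'; apply: sub_all => g /= /leq_trans; apply. Qed.

Lemma braid_eq_wf m u v : braid_eq m u v -> braid_wf m u = braid_wf m v.
Proof. by elim=> {u v} [|u v _ ->|u v w _ -> _ ->|u l r v -> ->]. Qed.

Lemma braid_eq_widen m m' u v : m <= m' -> braid_eq m u v -> braid_eq m' u v.
Proof.
move=> le_mm'; elim=> {u v} [w|u v _|u v w _ IHuv _ IHvw|u l r v wl wr lr].
- exact: braid_eq_refl.
- exact: braid_eq_sym.
- exact: braid_eq_trans IHuv IHvw.
- by apply: braid_eq_rel lr; apply: braid_wf_widen le_mm' _.
Qed.

Section BraidGroup.

Variable m : nat.
Implicit Types u v w x y : seq gen.

Lemma braid_eq_ctx x u v y : braid_wf m x -> braid_wf m y ->
  braid_eq m u v -> braid_eq m (x ++ u ++ y) (x ++ v ++ y).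
Proof.
move=> wx wy; elim=> {u v} [w|u v _|u v w _ IHuv _ IHvw|u l r v wl wr lr].
- exact: braid_eq_refl.
- exact: braid_eq_sym.
- exact: braid_eq_trans IHuv IHvw.
- have reassoc z : x ++ (u ++ z ++ v) ++ y = (x ++ u) ++ z ++ (v ++ y).
    by rewrite !catA.
  rewrite !reassoc; apply: braid_eq_rel lr; rewrite -reassoc !braid_wf_cat wx wy.
  + by rewrite -!braid_wf_cat wl.
  + by rewrite -!braid_wf_cat wr.
Qed.

Lemma braid_eq_catl x u v : braid_wf m x -> braid_eq m u v -> braid_eq m (x ++ u) (x ++ v).
Proof. by move=> wx /(braid_eq_ctx wx (isT : braid_wf m [::])); rewrite !cats0. Qed.

Lemma braid_eq_catr u v y : braid_wf m y -> braid_eq m u v -> braid_eq m (u ++ y) (v ++ y).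
Proof. exact: braid_eq_ctx [::] u v y isT. Qed.

Lemma braid_eq_cat u u' v v' : braid_wf m u' -> braid_wf m v ->
  braid_eq m u u' -> braid_eq m v v' -> braid_eq m (u ++ v) (u' ++ v').
Proof.
by move=> wu' wv eq_u eq_v; apply: braid_eq_trans (braid_eq_catr wv eq_u) (braid_eq_catl wu' eq_v).
Qed.

Lemma braid_eq_cancel x i e y : i.+1 < m -> braid_wf m x -> braid_wf m y ->
  braid_eq m (x ++ [:: (i, e); (i, ~~ e)] ++ y) (x ++ y).
Proof.
move=> lt_im wx wy; apply: (braid_eq_rel _ _ (br_cancel i e)).
- by rewrite !braid_wf_cat wx wy /= lt_im.
- by rewrite !braid_wf_cat wx wy.
Qed.

Lemma braid_eq_far x i e k f y : i.+1 < k -> k.+1 < m -> braid_wf m x -> braid_wf m y ->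
  braid_eq m (x ++ [:: (i, e); (k, f)] ++ y) (x ++ [:: (k, f); (i, e)] ++ y).
Proof.
move=> lt_ik lt_km wx wy; apply: (braid_eq_rel _ _ (br_far e f lt_ik));
  by rewrite !braid_wf_cat wx wy /= lt_km /=; lia.
Qed.

Definition inv_gen (g : gen) : gen := (g.1, ~~ g.2).
Definition inv_word (w : seq gen) : seq gen := rev (map inv_gen w).

Lemma inv_wordK : involutive inv_word.
Proof.
move=> w; rewrite /inv_word map_rev revK -map_comp map_id_in // => -[i e] _.
by rewrite /inv_gen /= negbK.
Qed.

Lemma braid_wf_inv w : braid_wf m (inv_word w) = braid_wf m w.
Proof. by rewrite /braid_wf all_rev all_map. Qed.

Lemma braid_eq_catV w : braid_wf m w -> braid_eq m (w ++ inv_word w) [::].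
Proof.
elim: w => [_|[i e] w IHw /= /andP[/= lt_im ww]]; first exact: braid_eq_refl.
rewrite /inv_word /= rev_cons -/(inv_word w) -cats1.
have -> : (i, e) :: w ++ inv_word w ++ [:: (i, ~~ e)]
        = [:: (i, e)] ++ (w ++ inv_word w) ++ [:: (i, ~~ e)] by rewrite /= catA.
apply: braid_eq_trans (braid_eq_ctx _ _ (IHw ww)) _; rewrite /= ?lt_im //.
exact: (braid_eq_cancel e lt_im (isT : braid_wf m [::]) (isT : braid_wf m [::])).
Qed.

Lemma braid_eq_cancelr u v y : braid_wf m u -> braid_wf m v -> braid_wf m y ->
  braid_eq m (u ++ y) (v ++ y) -> braid_eq m u v.
Proof.
move=> wu wv wy eq_uv.
have yK z : braid_wf m z -> braid_eq m ((z ++ y) ++ inv_word y) z.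
  by move=> wz; rewrite -catA -[z in braid_eq _ _ z]cats0; apply: braid_eq_catl (braid_eq_catV wy).
apply: braid_eq_trans (braid_eq_sym (yK u wu)) _; apply: braid_eq_trans (yK v wv).
by apply: braid_eq_catr eq_uv; rewrite braid_wf_inv.
Qed.

Lemma braid_eq_inv u v : braid_wf m u -> braid_wf m v ->
  braid_eq m u v -> braid_eq m (inv_word u) (inv_word v).
Proof.
move=> wu wv eq_uv.
have catVK z : braid_wf m z -> braid_eq m (inv_word z ++ z) [::].
  by move=> wz; rewrite -{2}(inv_wordK z); apply: braid_eq_catV; rewrite braid_wf_inv.
apply: (@braid_eq_cancelr _ _ u); rewrite ?braid_wf_inv //.
apply: braid_eq_trans (catVK u wu) (braid_eq_sym _).
by apply: braid_eq_trans (braid_eq_catl _ eq_uv) (catVK v wv); rewrite braid_wf_inv.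
Qed.

Lemma braid_eq_braidN i : i.+2 < m ->
  braid_eq m [:: (i, false); (i.+1, false); (i, false)]
             [:: (i.+1, false); (i, false); (i.+1, false)].
Proof.
move=> lt_im.
have w1 : braid_wf m [:: (i, true); (i.+1, true); (i, true)] by rewrite /= lt_im; lia.
have w2 : braid_wf m [:: (i.+1, true); (i, true); (i.+1, true)] by rewrite /= lt_im; lia.
have eq_pos : braid_eq m [:: (i, true); (i.+1, true); (i, true)]
                          [:: (i.+1, true); (i, true); (i.+1, true)].
  exact: (braid_eq_rel (u := [::]) (v := [::]) _ _ (br_braid i)).
exact (braid_eq_inv w1 w2 eq_pos).
Qed.

Lemma braid_eq_braid_mixed i : i.+2 < m ->
  braid_eq m [:: (i, true); (i.+1, false); (i, false)]
             [:: (i.+1, false); (i, false); (i.+1, true)].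
Proof.
move=> lt_im.
have wA : braid_wf m [:: (i, true); (i.+1, false); (i, false)] by rewrite /= lt_im; lia.
have wB : braid_wf m [:: (i.+1, false); (i, false); (i.+1, true)] by rewrite /= lt_im; lia.
have wi : braid_wf m [:: (i, true)] by rewrite /=; lia.
have wi1 : braid_wf m [:: (i.+1, true)] by rewrite /=; lia.
have /= eq_N := braid_eq_sym (braid_eq_ctx wi wi1 (braid_eq_braidN lt_im)).
apply: braid_eq_trans
  (braid_eq_sym (braid_eq_cancel (i := i.+1) false _ wA (isT : braid_wf m [::]))) _.
  by rewrite /=; lia.
apply: braid_eq_trans eq_N _.
by apply: (braid_eq_cancel (x := [::]) (i := i) true _ isT wB); lia.
Qed.

End BraidGroup.

Definition shift_word (j : nat) (w : seq gen) : seq gen := [seq (g.1 + j, g.2) | g <- w].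

Lemma shift_word_cat j u v : shift_word j (u ++ v) = shift_word j u ++ shift_word j v.
Proof. exact: map_cat. Qed.

Lemma braid_wf_shift m j w : braid_wf m w -> braid_wf (m + j) (shift_word j w).
Proof. by rewrite /braid_wf all_map; apply: sub_all => g /=; lia. Qed.

Lemma braid_rel_shift j l r : braid_rel l r -> braid_rel (shift_word j l) (shift_word j r).
Proof.
case=> [i e|i k e f lt_ik|i] /=.
- exact: br_cancel.
- by apply: br_far; lia.
- by rewrite !addSn; apply: br_braid.
Qed.

Lemma braid_eq_shift m j u v : braid_eq m u v -> braid_eq (m + j) (shift_word j u) (shift_word j v).
Proof.
elim=> {u v} [w|u v _|u v w _ IHuv _ IHvw|u l r v wl wr lr].
- exact: braid_eq_refl.
- exact: braid_eq_sym.
- exact: braid_eq_trans IHuv IHvw.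
- rewrite !shift_word_cat; apply: braid_eq_rel (braid_rel_shift j lr);
    by rewrite -!shift_word_cat; apply: braid_wf_shift.
Qed.

(* Moves the strand in position p to position 0, passing over the strands it crosses. *)
Fixpoint pull (p : nat) : seq gen :=
  if p is p'.+1 then (p', false) :: pull p' else [::].

Lemma braid_wf_pull m p : p < m -> braid_wf m (pull p).
Proof. by elim: p => //= p IHp lt_pm; rewrite lt_pm IHp //; lia. Qed.

Lemma braid_eq_pull_far m p i e : p < i -> i.+1 < m ->
  braid_eq m ((i, e) :: pull p) (pull p ++ [:: (i, e)]).
Proof.
elim: p => [|p IHp] lt_pi lt_im /=; first exact: braid_eq_refl.
apply: (@braid_eq_trans _ _ ((p, false) :: (i, e) :: pull p)).
  by apply: braid_eq_sym; apply: (braid_eq_far (x := [::])); rewrite ?braid_wf_pull //; lia.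
by apply: (braid_eq_catl (x := [:: (p, false)])); [rewrite /=; lia | apply: IHp; lia].
Qed.

Lemma braid_eq_pull_near m p i e : i.+1 < p -> p < m ->
  braid_eq m ((i, e) :: pull p) (pull p ++ [:: (i.+1, e)]).
Proof.
elim: p => [|p IHp] lt_ip lt_pm //=.
have [lt_ip'|<-] : i.+1 < p \/ i.+1 = p by lia.
- apply: (@braid_eq_trans _ _ ((p, false) :: (i, e) :: pull p)).
    by apply: (braid_eq_far (x := [::])); rewrite ?braid_wf_pull //; lia.
  by apply: (braid_eq_catl (x := [:: (p, false)])); [rewrite /=; lia | apply: IHp; lia].
- apply: (@braid_eq_trans _ _ ([:: (i.+1, false); (i, false); (i.+1, e)] ++ pull i)).
    apply: (@braid_eq_catr _ [:: (i, e); (i.+1, false); (i, false)]).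
      by apply: braid_wf_pull; lia.
    by clear IHp; case: e; [apply: braid_eq_braid_mixed | apply: braid_eq_braidN]; lia.
  apply: (braid_eq_catl (x := [:: (i.+1, false); (i, false)])); first by rewrite /=; lia.
  by apply: braid_eq_pull_far; lia.
Qed.

(** * Descending words and the combing normal form *)

Lemma rem_cat (T : eqType) (z : T) s1 s2 :
  rem z (s1 ++ s2) = if z \in s1 then rem z s1 ++ s2 else s1 ++ rem z s2.
Proof.
elim: s1 => //= a s1 IHs1; rewrite inE eq_sym.
by case: eqP => //= _; rewrite IHs1; case: ifP.
Qed.

Definition minseq (c : seq nat) : nat := head 0 (sort leq c).

Lemma minseq_perm c c' : perm_eq c c' -> minseq c = minseq c'.
Proof. by rewrite /minseq => /(perm_sortP leq_total leq_trans anti_leq) ->. Qed.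

Lemma minseq_mem c : c != [::] -> minseq c \in c.
Proof.
rewrite /minseq -(mem_sort leq) -size_eq0 -(size_sort leq).
by case: sort => //= a s _; rewrite mem_head.
Qed.

Lemma minseq_le c z : z \in c -> minseq c <= z.
Proof.
rewrite /minseq -(mem_sort leq); have := sort_sorted leq_total c.
case: sort => //= a s /(order_path_min leq_trans)/allP min_a.
by rewrite inE => /predU1P[-> | /min_a].
Qed.

Definition swap_at (c : seq nat) (i : nat) : seq nat :=
  take i c ++ nth 0 c i.+1 :: nth 0 c i :: drop i.+2 c.

(* [c] lists the labels of the strands by position; as in [bubble], the crossing must put
   the smaller label on top. *)
Definition crossing_ok (c : seq nat) (g : gen) : bool :=
  (g.1.+1 < size c) && (g.2 == (nth 0 c g.1 < nth 0 c g.1.+1)).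

Fixpoint descending (c : seq nat) (w : seq gen) : bool :=
  if w is g :: w' then crossing_ok c g && descending (swap_at c g.1) w' else true.

Fixpoint labels_after (c : seq nat) (w : seq gen) : seq nat :=
  if w is g :: w' then labels_after (swap_at c g.1) w' else c.

Lemma swap_at_cat pre x y rest :
  swap_at (pre ++ x :: y :: rest) (size pre) = pre ++ y :: x :: rest.
Proof.
rewrite /swap_at take_size_cat // drop_cat !nth_cat ltnn !ltnNge !leqW //.
by rewrite subnn subSnn -addn2 addKn /= drop0.
Qed.

Lemma perm_swap2 (T : eqType) (pre : seq T) (x y : T) rest :
  perm_eq (pre ++ y :: x :: rest) (pre ++ x :: y :: rest).
Proof. by rewrite perm_cat2l -cat1s -(cat1s x) perm_catCA. Qed.

Lemma crossing_ok_cat pre x y rest e :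
  crossing_ok (pre ++ x :: y :: rest) (size pre, e) = (e == (x < y)).
Proof.
rewrite /crossing_ok /= size_cat (_ : (size pre).+1 < _) /=; last lia.
by rewrite !nth_cat ltnn (ltnNge (size pre).+1) leqnSn /= subnn subSnn.
Qed.

Lemma crossing_okP c i e : crossing_ok c (i, e) ->
  exists pre x y rest, [/\ c = pre ++ x :: y :: rest, size pre = i & e = (x < y)].
Proof.
case/andP=> /= lt_ic /eqP ->.
exists (take i c), (nth 0 c i), (nth 0 c i.+1), (drop i.+2 c); split => //.
- by rewrite -(drop_nth 0 lt_ic) -drop_nth ?cat_take_drop // ltnW.
- by rewrite size_takel // ltnW // ltnW.
Qed.

Lemma perm_swap_at c g : crossing_ok c g -> perm_eq (swap_at c g.1) c.
Proof.
by case: g => i e /crossing_okP[pre [x [y [rest [-> <- _]]]]]; rewrite swap_at_cat perm_swap2.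
Qed.

Lemma perm_labels_after c w : descending c w -> perm_eq (labels_after c w) c.
Proof.
elim: w c => //= g w IHw c /andP[ok_g desc_w].
exact: perm_trans (IHw _ desc_w) (perm_swap_at ok_g).
Qed.

Lemma descending_wf c w : descending c w -> braid_wf (size c) w.
Proof.
elim: w c => //= g w IHw c /andP[ok_g /IHw].
by rewrite (perm_size (perm_swap_at ok_g)); case/andP: ok_g => -> _ ->.
Qed.

Lemma descending_cat c u v :
  descending c (u ++ v) = descending c u && descending (labels_after c u) v.
Proof. by elim: u c => //= g u IHu c; rewrite IHu andbA. Qed.

Lemma labels_after_cat c u v : labels_after c (u ++ v) = labels_after (labels_after c u) v.
Proof. by elim: u c => //= g u IHu c. Qed.

Fixpoint comb_rec (k : nat) (c : seq nat) : seq gen :=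
  if k is k'.+1 then
    pull (index (minseq c) c) ++ shift_word 1 (comb_rec k' (rem (minseq c) c))
  else [::].

Definition comb (c : seq nat) : seq gen := comb_rec (size c) c.

Lemma comb_cons c : c != [::] ->
  comb c = pull (index (minseq c) c) ++ shift_word 1 (comb (rem (minseq c) c)).
Proof. by move=> c_nil; rewrite /comb size_rem ?minseq_mem //; case: c c_nil. Qed.

Lemma braid_wf_comb c : braid_wf (size c) (comb c).
Proof.
move Hk: (size c) => k; elim: k c Hk => [|k IHk] c size_c; first by case: c size_c.
have c_nil : c != [::] by case: c size_c.
have size_rem_c : size (rem (minseq c) c) = k by rewrite size_rem ?minseq_mem // size_c.
rewrite comb_cons // braid_wf_cat braid_wf_pull -?size_c ?index_mem ?minseq_mem //=.
by rewrite size_c -addn1; apply/braid_wf_shift/IHk.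
Qed.

Lemma braid_eq_pull_shift m p i j e u v : p < m.+1 -> braid_wf m u ->
  braid_eq m.+1 ((i, e) :: pull p) (pull p ++ [:: (j.+1, e)]) ->
  braid_eq m ((j, e) :: u) v ->
  braid_eq m.+1 ((i, e) :: pull p ++ shift_word 1 u) (pull p ++ shift_word 1 v).
Proof.
move=> lt_pm wu eq_pull eq_uv.
have wsu : braid_wf m.+1 (shift_word 1 u) by rewrite -addn1 braid_wf_shift.
apply: braid_eq_trans (braid_eq_catr wsu eq_pull) _; rewrite -catA.
apply: braid_eq_catl; first exact: braid_wf_pull.
by have := braid_eq_shift 1 eq_uv; rewrite /= !addn1.
Qed.

(* Cases of [braid_eq_comb_swap], according to the position of the smallest label t: when t
   is on one of the two crossing strands the crossing is absorbed by [pull]; otherwise the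
   crossing slides past [pull] and the other strands are handled by induction. *)
Section CombSwap.

Variables (pre : seq nat) (x y : nat) (rest : seq nat).
Hypothesis uniq_c : uniq (pre ++ x :: y :: rest).

Local Notation c := (pre ++ x :: y :: rest).
Local Notation c' := (pre ++ y :: x :: rest).
Local Notation t := (minseq c).
Local Notation comb_swap_eq := (braid_eq (size c) ((size pre, x < y) :: comb c') (comb c)).

Let c_nil : c != [::]. Proof. by case: pre. Qed.
Let c'_nil : c' != [::]. Proof. by case: pre. Qed.

Let minseq_c' : minseq c' = t.
Proof. exact/minseq_perm/perm_swap2. Qed.

Let uniq_facts : [/\ x \notin pre, y \notin pre, x != y, x \notin rest & y \notin rest].
Proof.
move: uniq_c; rewrite cat_uniq /= !inE !negb_or.
by case/and3P=> _ /and3P[-> -> _] /and3P[/andP[-> ->] -> _].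
Qed.

Lemma comb_swap_min_left : t = x -> comb_swap_eq.
Proof.
move=> tx; have [xpre _ neq_xy _ _] := uniq_facts.
have lt_xy : x < y by rewrite ltn_neqAle neq_xy -tx minseq_le // mem_cat !inE eqxx !orbT.
have -> : comb c' = (size pre, false) :: comb c.
  rewrite (comb_cons c_nil) (comb_cons c'_nil) minseq_c' tx !index_cat !rem_cat (negbTE xpre).
  by rewrite /= eqxx eq_sym (negbTE neq_xy) addn0 addn1.
rewrite lt_xy; apply: (braid_eq_cancel (x := [::])) (braid_wf_comb c) => //.
by rewrite size_cat /=; lia.
Qed.

Lemma comb_swap_min_right : t = y -> comb_swap_eq.
Proof.
move=> ty; have [_ ypre neq_xy _ _] := uniq_facts.
have -> : comb c = (size pre, false) :: comb c'.
  rewrite (comb_cons c_nil) (comb_cons c'_nil) minseq_c' ty !index_cat !rem_cat (negbTE ypre).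
  by rewrite /= eqxx (negbTE neq_xy) addn0 addn1.
rewrite ltnNge -ty minseq_le ?mem_cat ?inE ?eqxx ?orbT //.
exact: braid_eq_refl.
Qed.

Lemma comb_swap_min_pre : t \in pre ->
  braid_eq (size c).-1 ((size (rem t pre), x < y) :: comb (rem t pre ++ y :: x :: rest))
                       (comb (rem t pre ++ x :: y :: rest)) ->
  comb_swap_eq.
Proof.
move=> tpre eq_rem.
have size_c : size c = (size c).-1.+1 by rewrite size_cat addnS.
have lt_tpre : index t pre < size pre by rewrite index_mem.
have size_pre : size pre = (size (rem t pre)).+1.
  by rewrite size_rem // prednK // (leq_ltn_trans _ lt_tpre).
rewrite (comb_cons c_nil) (comb_cons c'_nil) minseq_c' !index_cat !rem_cat tpre.
rewrite {1}size_c size_pre; apply: braid_eq_pull_shift eq_rem.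
- by rewrite -size_c size_cat; lia.
- by have := braid_wf_comb (rem t pre ++ y :: x :: rest); rewrite !size_cat size_pre addSn.
- by apply: braid_eq_pull_far; rewrite -?size_c ?size_cat -?size_pre /=; lia.
Qed.

Let min_rest_facts : t \in rest -> [/\ (t \in pre) = false, (x == t) = false & (y == t) = false].
Proof.
move=> trest; have [_ _ _ xrest yrest] := uniq_facts.
split; [|by apply: contraNF xrest => /eqP -> | by apply: contraNF yrest => /eqP ->].
move: uniq_c; rewrite cat_uniq => /and3P[_ /hasPn/(_ t) + _].
by rewrite !inE trest !orbT => /(_ isT)/negbTE.
Qed.

Lemma rem_min_rest : t \in rest -> rem t c = pre ++ x :: y :: rem t rest.
Proof. by case/min_rest_facts=> tpre xt yt; rewrite rem_cat tpre /= xt yt. Qed.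

Lemma comb_swap_min_rest : t \in rest ->
  braid_eq (size c).-1 ((size pre, x < y) :: comb (pre ++ y :: x :: rem t rest))
                       (comb (pre ++ x :: y :: rem t rest)) ->
  comb_swap_eq.
Proof.
move=> trest eq_rem; have [tpre xt yt] := min_rest_facts trest.
have size_c : size c = (size c).-1.+1 by rewrite size_cat addnS.
have lt_trest : index t rest < size rest by rewrite index_mem.
have size_rest : size rest = (size (rem t rest)).+1.
  by rewrite size_rem // prednK // (leq_ltn_trans _ lt_trest).
rewrite (comb_cons c_nil) (comb_cons c'_nil) minseq_c' !index_cat !rem_cat tpre /= xt yt.
rewrite {1}size_c; apply: braid_eq_pull_shift eq_rem.
- by rewrite -size_c size_cat /=; lia.
- by have := braid_wf_comb (pre ++ y :: x :: rem t rest); rewrite !size_cat /= size_rest !addnS.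
- by apply: braid_eq_pull_near; rewrite -?size_c ?size_cat /=; lia.
Qed.

End CombSwap.

Lemma braid_eq_comb_swap pre x y rest : uniq (pre ++ x :: y :: rest) ->
  braid_eq (size (pre ++ x :: y :: rest))
           ((size pre, x < y) :: comb (pre ++ y :: x :: rest)) (comb (pre ++ x :: y :: rest)).
Proof.
move Hk: (size _) => k; elim: k pre x y rest Hk => [|k IHk] pre x y rest size_c uniq_c.
  by rewrite size_cat addnS in size_c.
set c := pre ++ x :: y :: rest; set t := minseq c.
have tc : t \in c by apply: minseq_mem; rewrite /c; case: (pre).
have size_rem_c : size (rem t c) = k by rewrite size_rem // size_c.
have uniq_rem_c : uniq (rem t c) by apply: rem_uniq.
rewrite -size_c; move: (tc); rewrite mem_cat !inE => /orP[tpre | /or3P[/eqP tx | /eqP ty | trest]].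
- have rem_c : rem t c = rem t pre ++ x :: y :: rest by rewrite rem_cat tpre.
  by apply: (comb_swap_min_pre uniq_c tpre); rewrite size_c; apply: IHk; rewrite -rem_c.
- exact: comb_swap_min_left uniq_c tx.
- exact: comb_swap_min_right uniq_c ty.
- by apply: (comb_swap_min_rest uniq_c trest); rewrite size_c; apply: IHk;
    rewrite -(rem_min_rest uniq_c trest).
Qed.

Lemma braid_eq_descending_comb c w : uniq c -> descending c w ->
  braid_eq (size c) (w ++ comb (labels_after c w)) (comb c).
Proof.
elim: w c => [|[i e] w IHw] c /=; first by move=> _ _; apply: braid_eq_refl.
move=> uniq_c /andP[/crossing_okP[pre [x [y [rest [c_eq <- ->]]]]]].
subst c; rewrite swap_at_cat => desc_w.
have := IHw _ _ desc_w; rewrite (perm_size (perm_swap2 _ _ _ _)) (perm_uniq (perm_swap2 _ _ _ _)).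
move=> /(_ uniq_c) eq_w.
apply: braid_eq_trans (braid_eq_comb_swap uniq_c).
by apply: (braid_eq_catl (x := [:: (size pre, x < y)])) eq_w; rewrite /= size_cat /=; lia.
Qed.

Lemma descending_braid_eq c w1 w2 : uniq c -> descending c w1 -> descending c w2 ->
  labels_after c w1 = labels_after c w2 -> braid_eq (size c) w1 w2.
Proof.
move=> uniq_c desc1 desc2 labels_eq.
apply: (@braid_eq_cancelr _ _ _ (comb (labels_after c w1))).
- exact: descending_wf desc1.
- exact: descending_wf desc2.
- by rewrite -(perm_size (perm_labels_after desc1)) braid_wf_comb.
- apply: braid_eq_trans (braid_eq_descending_comb uniq_c desc1) _.
  by rewrite labels_eq; apply/braid_eq_sym/braid_eq_descending_comb.
Qed.

(** * Multi-crossings as descending words *)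

Fixpoint order_iso (s xs : seq nat) : bool :=
  match s, xs with
  | [::], [::] => true
  | a :: s', x :: xs' => all2 (fun b y => (a < b) == (x < y)) s' xs' && order_iso s' xs'
  | _, _ => false
  end.

Lemma order_iso_refl s : order_iso s s.
Proof.
elim: s => //= a s ->; rewrite andbT.
by elim: s => //= b s ->; rewrite eqxx.
Qed.

Lemma order_iso_map f xs : {in xs &, forall a b, (f a < f b) = (a < b)} ->
  order_iso (map f xs) xs.
Proof.
elim: xs => //= a xs IHxs f_mono; apply/andP; split.
- have f_mono_a : {in xs, forall b, (f a < f b) = (a < b)}.
    by move=> b b_xs; apply: f_mono; rewrite inE ?eqxx ?b_xs ?orbT.
  elim: xs {IHxs f_mono} f_mono_a => //= b xs IHxs f_mono_a.
  rewrite f_mono_a ?mem_head // eqxx /=.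
  by apply: IHxs => d d_xs; apply: f_mono_a; rewrite inE d_xs orbT.
- by apply: IHxs => d d' d_xs d'_xs; apply: f_mono; rewrite inE ?d_xs ?d'_xs orbT.
Qed.

Lemma bubble_descending a x post bs : forall pre ys, all2 (fun b y => (a < b) == (x < y)) bs ys ->
  descending (pre ++ x :: ys ++ post) (bubble (size pre) a bs) /\
  labels_after (pre ++ x :: ys ++ post) (bubble (size pre) a bs) = pre ++ ys ++ x :: post.
Proof.
elim: bs => [|b bs IHbs] pre [|y ys] //= /andP[/eqP ab_xy all_bs].
have := IHbs (rcons pre y) ys all_bs; rewrite size_rcons cat_rcons -cats1 -!catA /=.
by rewrite swap_at_cat crossing_ok_cat ab_xy eqxx.
Qed.

Lemma mcross_descending s : forall pre xs post, order_iso s xs ->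
  descending (pre ++ xs ++ post) (mcross_word (size pre) s) /\
  labels_after (pre ++ xs ++ post) (mcross_word (size pre) s) = pre ++ rev xs ++ post.
Proof.
elim: s => [|a s IHs] pre [|x xs] post //= /andP[all_s iso_s].
have [desc_b labels_b] := bubble_descending post pre all_s.
have [desc_m labels_m] := IHs pre xs (x :: post) iso_s.
by rewrite descending_cat labels_after_cat desc_b labels_b desc_m labels_m rev_cons cat_rcons.
Qed.

Lemma bubble_shift j k a s : bubble (k + j) a s = shift_word j (bubble k a s).
Proof. by elim: s k => //= b s IHs k; rewrite -addSn IHs. Qed.

Lemma mcross_word_shift j k s : mcross_word (k + j) s = shift_word j (mcross_word k s).
Proof. by elim: s => //= a s IHs; rewrite shift_word_cat IHs bubble_shift. Qed.

Lemma ncb_word_cat cs cs' : ncb_word (cs ++ cs') = ncb_word cs ++ ncb_word cs'.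
Proof. by rewrite /ncb_word map_cat flatten_cat. Qed.

Lemma ncb_word_shift j cs :
  ncb_word [seq (c.1 + j, c.2) | c <- cs] = shift_word j (ncb_word cs).
Proof.
elim: cs => // c cs IHcs.
by rewrite map_cons /ncb_word /= -!/(ncb_word _) IHcs shift_word_cat mcross_word_shift.
Qed.

Lemma count_predD (T : Type) (p q : pred T) s : subpred p q ->
  count q s = count p s + count (predD q p) s.
Proof.
move=> sub_pq; elim: s => //= y s ->.
by case: (boolP (p y)) => [/sub_pq -> | _] /=; rewrite ?add0n ?addnA // [q y + _]addnC.
Qed.

Definition rank_of (xs : seq nat) (x : nat) : nat := (count (fun y => y < x) xs).+1.
Definition ranks (xs : seq nat) : seq nat := map (rank_of xs) xs.

Lemma rank_of_lt xs a b : a \in xs -> (rank_of xs a < rank_of xs b) = (a < b).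
Proof.
move=> a_xs; rewrite /rank_of ltnS; case: (ltnP a b) => [lt_ab | le_ba].
- rewrite (@count_predD _ (fun y => y < a) (fun y => y < b)); last by move=> y /ltn_trans; apply.
  suff : 0 < count (predD (fun y => y < b) (fun y => y < a)) xs by lia.
  by rewrite -has_count; apply/hasP; exists a; rewrite //= ltnn lt_ab.
- by apply/negbTE; rewrite -leqNgt; apply: sub_count => y /= /leq_trans; apply.
Qed.

Lemma order_iso_ranks xs : order_iso (ranks xs) xs.
Proof. by apply: order_iso_map => a b a_xs _; apply: rank_of_lt. Qed.

Lemma perm_ranks xs : uniq xs -> perm_eq (ranks xs) (iota 1 (size xs)).
Proof.
move=> uniq_xs.
have uniq_ranks : uniq (ranks xs).
  rewrite map_inj_in_uniq; first exact: uniq_xs.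
  move=> a b a_xs b_xs eq_ab; case: (ltngtP a b) => // [lt_ab | lt_ba].
  - by move: lt_ab; rewrite -(rank_of_lt _ a_xs) eq_ab ltnn.
  - by move: lt_ba; rewrite -(rank_of_lt _ b_xs) eq_ab ltnn.
apply: uniq_perm; rewrite ?iota_uniq //.
apply: (uniq_min_size uniq_ranks _ _).2; last by rewrite size_iota size_map.
move=> _ /mapP[x x_xs ->]; rewrite mem_iota /rank_of add1n ltnS /=.
rewrite -(count_predC (fun y => y < x) xs) -[X in X < _]addn0 ltn_add2l -has_count.
by apply/hasP; exists x; rewrite //= ltnn.
Qed.

(** * Window reversals *)

(* h pairs of reversals at k, k+1 rotate the window of 2h+1 entries at k by 2h places;
   a last reversal at k then completes its reversal. *)
Definition odd_rev_schedule (h k : nat) : seq nat := flatten (nseq h [:: k; k.+1]) ++ [:: k].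

Fixpoint pass_schedule (h o r : nat) : seq nat :=
  if r is r'.+1 then o :: pass_schedule h (o + h) r' else odd_rev_schedule h o.

Fixpoint rev_schedule (h o b : nat) : seq nat :=
  if b is b'.+1 then pass_schedule h o b' ++ rev_schedule h o b' else [::].

Section WindowReversal.

Variable T : Type.
Implicit Types (P Q M X Y Z u l : seq T) (Ys Bs : seq (seq T)).

Definition rev_window (k n : nat) l : seq T :=
  take k l ++ rev (take n (drop k l)) ++ drop (k + n) l.

Definition rev_windows (n : nat) l (ks : seq nat) : seq T :=
  foldl (fun l k => rev_window k n l) l ks.

Lemma rev_window_cat P X Q : rev_window (size P) (size X) (P ++ X ++ Q) = P ++ rev X ++ Q.
Proof.
rewrite /rev_window take_size_cat // drop_size_cat // take_size_cat //.
by rewrite addnC -drop_drop !drop_size_cat.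
Qed.

Lemma rev_windows_cat n l ks ks' :
  rev_windows n l (ks ++ ks') = rev_windows n (rev_windows n l ks) ks'.
Proof. exact: foldl_cat. Qed.

Lemma rev_windows_rotate2 P u a b Q :
  rev_windows (size u).+1 (P ++ (u ++ [:: a; b]) ++ Q) [:: size P; (size P).+1]
  = P ++ [:: a, b & u] ++ Q.
Proof.
have -> : P ++ (u ++ [:: a; b]) ++ Q = P ++ (u ++ [:: a]) ++ b :: Q by rewrite -!catA.
have size_ua : (size u).+1 = size (u ++ [:: a]) by rewrite size_cat addn1.
rewrite /rev_windows /= size_ua rev_window_cat rev_cat /=.
have -> : P ++ a :: rev u ++ b :: Q = (P ++ [:: a]) ++ (rev u ++ [:: b]) ++ Q by rewrite -!catA.
have -> : (size P).+1 = size (P ++ [:: a]) by rewrite size_cat addn1.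
have -> : size (u ++ [:: a]) = size (rev u ++ [:: b]) by rewrite !size_cat size_rev.
by rewrite rev_window_cat rev_cat revK -catA.
Qed.

Lemma rev_windows_rotate n j P X Y Q : size X + size Y = n.+1 -> size Y = j.*2 ->
  rev_windows n (P ++ (X ++ Y) ++ Q) (flatten (nseq j [:: size P; (size P).+1]))
  = P ++ (Y ++ X) ++ Q.
Proof.
elim: j X Y => [|j IHj] X Y size_XY size_Y.
  by case: Y size_XY size_Y => //= _ _; rewrite cats0.
have [Y' [a [b Y_eq]]] : exists Y' a b, Y = Y' ++ [:: a; b].
  case/lastP: Y {size_XY} size_Y => [|Y1 b] //; case/lastP: Y1 => [|Y' a] //.
  by exists Y', a, b; rewrite -!cats1 -catA.
subst Y; rewrite !size_cat /= doubleS in size_XY size_Y.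
have -> : flatten (nseq j.+1 [:: size P; (size P).+1])
        = [:: size P; (size P).+1] ++ flatten (nseq j [:: size P; (size P).+1]) by [].
have n_eq : n = (size (X ++ Y')).+1 by rewrite size_cat; lia.
rewrite rev_windows_cat (catA X Y') {2}n_eq rev_windows_rotate2.
rewrite -[[:: a, b & X ++ Y']]/(([:: a; b] ++ X) ++ Y') IHj ?size_cat /=.
- by rewrite -!catA.
- lia.
- lia.
Qed.

Lemma rev_windows_odd h P M Q : size M = (h + h).+1 ->
  rev_windows (h + h) (P ++ M ++ Q) (odd_rev_schedule h (size P)) = P ++ rev M ++ Q.
Proof.
case: M => [|x Y] //= [size_Y].
have -> : P ++ x :: Y ++ Q = P ++ ([:: x] ++ Y) ++ Q by [].
rewrite /odd_rev_schedule rev_windows_cat (@rev_windows_rotate _ h) ?size_Y ?addnn //= -catA.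
by rewrite /rev_windows /= -addnn -size_Y rev_window_cat rev_cons -cats1 -catA.
Qed.

Lemma rev_windows_pass h Ys P X Z Q :
  all (fun Y => size Y == h) Ys -> size X = h -> size Z = h.+1 ->
  rev_windows (h + h) (P ++ X ++ flatten Ys ++ Z ++ Q) (pass_schedule h (size P) (size Ys))
  = P ++ flatten (map rev Ys) ++ rev Z ++ (if odd (size Ys) then X else rev X) ++ Q.
Proof.
elim: Ys P X => [|Y Ys IHYs] P X /=.
  move=> _ size_X size_Z; rewrite (catA X Z) rev_windows_odd ?size_cat ?size_X ?size_Z ?addnS //.
  by rewrite rev_cat -catA.
case/andP=> /eqP size_Y all_Ys size_X size_Z.
have -> : P ++ X ++ (Y ++ flatten Ys) ++ Z ++ Q = P ++ (X ++ Y) ++ flatten Ys ++ Z ++ Q.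
  by rewrite -!catA.
have size_XY : h + h = size (X ++ Y) by rewrite size_cat size_X size_Y.
rewrite [in rev_window _ _ _]size_XY rev_window_cat rev_cat -catA catA.
have -> : size P + h = size (P ++ rev Y) by rewrite size_cat size_rev size_Y.
rewrite IHYs ?size_rev // -!catA.
by case: odd; rewrite ?revK.
Qed.

Lemma rev_windows_schedule h P Bs Z Q : all (fun B => size B == h) Bs -> size Z = h.+1 ->
  rev_windows (h + h) (P ++ flatten Bs ++ Z ++ Q) (rev_schedule h (size P) (size Bs))
  = P ++ (if odd (size Bs) then rev Z else Z)
      ++ flatten [seq (if odd (size Bs) then rev B else B) | B <- rev Bs] ++ Q.
Proof.
move Hb: (size Bs) => b; elim: b Bs Z Q Hb => [|b IHb] [|B Bs] Z Q //= [size_Bs].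
case/andP=> /eqP size_B all_Bs size_Z.
rewrite rev_windows_cat -catA -size_Bs rev_windows_pass // size_Bs.
rewrite IHb ?size_map ?size_rev //; last first.
  by rewrite all_map; apply: sub_all all_Bs => Y /=; rewrite size_rev.
rewrite rev_cons map_rcons flatten_rcons -map_rev -!catA.
by case: odd => /=; rewrite ?revK ?(mapK revK) !map_id.
Qed.

Lemma rev_windows_rev_schedule h b l : odd b -> size l = b * h + h.+1 ->
  rev_windows (h + h) l (rev_schedule h 0 b) = rev l.
Proof.
move=> odd_b size_l; set Bs := reshape (nseq b h) (take (b * h) l).
have size_take_l : size (take (b * h) l) = sumn (nseq b h).
  by rewrite sumn_nseq [h * b]mulnC size_takel // size_l leq_addr.
have l_eq : l = flatten Bs ++ drop (b * h) l by rewrite reshapeKr ?size_take_l // cat_take_drop.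
have all_Bs : all (fun B => size B == h) Bs.
  rewrite -(all_map size (pred1 h)) -/(shape Bs) reshapeKl ?size_take_l //.
  by rewrite all_nseq /= eqxx orbT.
have size_Z : size (drop (b * h) l) = h.+1 by rewrite size_drop size_l addKn.
have := rev_windows_schedule [::] [::] all_Bs size_Z.
rewrite /= !cats0 size_reshape size_nseq odd_b -l_eq => ->.
by rewrite [in RHS]l_eq rev_cat rev_flatten map_rev.
Qed.

End WindowReversal.

Lemma perm_rev_window (T : eqType) k n (l : seq T) : perm_eq (rev_window k n l) l.
Proof.
have l_eq : l = take k l ++ take n (drop k l) ++ drop (k + n) l.
  by rewrite addnC -drop_drop !cat_take_drop.
by rewrite [in X in perm_eq _ X]l_eq perm_cat2l perm_cat2r perm_rev.
Qed.

Lemma pass_schedule_le h o r : all (fun k => k <= o + r * h + 1) (pass_schedule h o r).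
Proof.
elim: r o => [|r IHr] o /=.
  rewrite /odd_rev_schedule all_cat /= andbT mul0n addn0 leq_addr andbT.
  by elim: h => //= h ->; rewrite leq_addr addn1 ltnSn.
rewrite (_ : o <= _) /=; last lia.
by apply: sub_all (IHr (o + h)) => k /=; rewrite mulSn; lia.
Qed.

Lemma rev_schedule_le h o b : all (fun k => k + (h + h) <= o + b * h + h.+1) (rev_schedule h o b).
Proof.
elim: b => //= b IHb; rewrite all_cat; apply/andP; split.
- by apply: sub_all (pass_schedule_le h o b) => k /= le_k; rewrite mulSn; lia.
- by apply: sub_all IHb => k /= le_k; rewrite mulSn; lia.
Qed.

Fixpoint window_crossings (n : nat) (l : seq nat) (ks : seq nat) : seq (nat * seq nat) :=
  if ks is k :: ks' then (k, ranks (take n (drop k l))) :: window_crossings n (rev_window k n l) ks'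
  else [::].

Lemma window_crossings_descending n ks l : uniq l -> all (fun k => k + n <= size l) ks ->
  descending l (ncb_word (window_crossings n l ks)) /\
  labels_after l (ncb_word (window_crossings n l ks)) = rev_windows n l ks.
Proof.
elim: ks l => [|k ks IHks] l uniq_l //= /andP[le_kl all_ks].
have perm_l := perm_rev_window k n l.
have uniq_l' : uniq (rev_window k n l) by rewrite (perm_uniq perm_l).
have all_ks' : all (fun i => i + n <= size (rev_window k n l)) ks by rewrite (perm_size perm_l).
have [desc_ks labels_ks] := IHks _ uniq_l' all_ks'.
set X := take n (drop k l).
have l_eq : l = take k l ++ X ++ drop (k + n) l by rewrite addnC -drop_drop !cat_take_drop.
have size_k : size (take k l) = k by rewrite size_takel // (leq_trans (leq_addr n k)).
have [desc_k labels_k] := mcross_descending (take k l) (drop (k + n) l) (order_iso_ranks X).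
rewrite -l_eq size_k in desc_k labels_k.
rewrite /ncb_word /= -/(ncb_word _) descending_cat labels_after_cat desc_k labels_k.
by split.
Qed.

Lemma window_crossings_valid n m j ks l : uniq l -> all (fun k => k + n <= size l) ks ->
  size l + j <= m ->
  all (valid_ncross n m) [seq (c.1 + j, c.2) | c <- window_crossings n l ks].
Proof.
elim: ks l => [|k ks IHks] l uniq_l //= /andP[le_kl all_ks] le_lm.
have perm_l := perm_rev_window k n l.
apply/andP; split; last by apply: IHks; rewrite ?(perm_uniq perm_l) ?(perm_size perm_l).
rewrite /valid_ncross /= (_ : k + j + n <= m); last lia.
have size_X : size (take n (drop k l)) = n.
  by rewrite size_takel // size_drop leq_subRL // (leq_trans (leq_addr n k)).
by rewrite -{2}size_X; apply/perm_ranks/take_uniq/drop_uniq.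
Qed.

(** * Splitting a (b h + h + 1)-crossing into 2h-crossings *)

Lemma braid_wf_bubble m j a s : j + size s < m -> braid_wf m (bubble j a s).
Proof. by elim: s j => //= b s IHs j lt_jm; rewrite IHs; [lia | rewrite addSnnS]. Qed.

Lemma braid_wf_mcross_word m j s : j + size s <= m -> braid_wf m (mcross_word j s).
Proof.
elim: s => //= a s IHs le_jm.
by rewrite braid_wf_cat braid_wf_bubble ?IHs //; lia.
Qed.

Lemma braid_wf_ncb_word n m cs : all (valid_ncross n m) cs -> braid_wf m (ncb_word cs).
Proof.
elim: cs => //= [[j s]] cs IHcs /andP[/andP[/= le_jm /perm_size size_s] valid_cs].
rewrite braid_wf_cat IHcs // andbT braid_wf_mcross_word //.
by rewrite size_s size_iota.
Qed.

Definition split_crossing (h b : nat) (c : nat * seq nat) : seq (nat * seq nat) :=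
  [seq (d.1 + c.1, d.2) | d <- window_crossings (h + h) c.2 (rev_schedule h 0 b)].

Definition split_crossings (h b : nat) (cs : seq (nat * seq nat)) : seq (nat * seq nat) :=
  flatten (map (split_crossing h b) cs).

Section SplitCrossing.

Variables (h b m : nat).
Hypothesis odd_b : odd b.

Lemma split_crossing_valid c : valid_ncross (b * h + h.+1) m c ->
  all (valid_ncross (h + h) m) (split_crossing h b c).
Proof.
case: c => j s /andP[/= le_jm perm_s].
have size_s : size s = b * h + h.+1 by rewrite (perm_size perm_s) size_iota.
apply: window_crossings_valid.
- by rewrite (perm_uniq perm_s) iota_uniq.
- by rewrite size_s; apply: rev_schedule_le.
- by rewrite size_s /=; lia.
Qed.

Lemma braid_eq_split_crossing c : valid_ncross (b * h + h.+1) m c ->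
  braid_eq m (ncb_word (split_crossing h b c)) (mcross_word c.1 c.2).
Proof.
case: c => j s /andP[/= le_jm perm_s].
have size_s : size s = b * h + h.+1 by rewrite (perm_size perm_s) size_iota.
have uniq_s : uniq s by rewrite (perm_uniq perm_s) iota_uniq.
have sched_le : all (fun k => k + (h + h) <= size s) (rev_schedule h 0 b).
  by rewrite size_s; apply: rev_schedule_le.
have [desc_w labels_w] := window_crossings_descending uniq_s sched_le.
have [desc_c labels_c] := mcross_descending [::] [::] (order_iso_refl s).
rewrite /= !cats0 in desc_c labels_c.
rewrite rev_windows_rev_schedule // -labels_c in labels_w.
have eq_w := descending_braid_eq uniq_s desc_w desc_c labels_w.
rewrite /split_crossing ncb_word_shift /= -[in mcross_word j _](add0n j) mcross_word_shift.
by apply: braid_eq_widen (braid_eq_shift j eq_w); rewrite size_s; lia.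
Qed.

Lemma braid_eq_split_crossings cs : all (valid_ncross (b * h + h.+1) m) cs ->
  braid_eq m (ncb_word (split_crossings h b cs)) (ncb_word cs).
Proof.
elim: cs => [|c cs IHcs] /=; first by move=> _; apply: braid_eq_refl.
case/andP=> valid_c valid_cs; rewrite /split_crossings /= ncb_word_cat.
apply: braid_eq_cat (braid_eq_split_crossing valid_c) (IHcs valid_cs).
- case/andP: valid_c => le_cm /perm_size size_c.
  by apply: braid_wf_mcross_word; rewrite size_c size_iota.
- by rewrite (braid_eq_wf (IHcs valid_cs)); apply: braid_wf_ncb_word valid_cs.
Qed.

Lemma split_crossings_valid cs : all (valid_ncross (b * h + h.+1) m) cs ->
  all (valid_ncross (h + h) m) (split_crossings h b cs).
Proof.
elim: cs => //= c cs IHcs /andP[valid_c valid_cs].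
by rewrite /split_crossings /= all_cat split_crossing_valid // IHcs.
Qed.

End SplitCrossing.

Theorem corollary5p5 (m0 : nat) (w0 : seq gen) :
  0 < m0 -> braid_wf m0 w0 -> ~ is_unlink m0 w0 ->
  forall n : nat, ~~ odd n -> 2 <= n ->
  forall m : nat, ncb_closure (3 * n + 1) m m0 w0 ->
  exists2 m' : nat, m' <= m & ncb_closure n m' m0 w0.
Proof.
move=> _ _ _ n even_n _ m [cs [m_gt0 valid_cs markov_cs]].
set h := n./2.
have n_eq : n = h + h by rewrite addnn /h -[n in LHS](odd_double_half n) (negbTE even_n).
have size_eq : 3 * n + 1 = 5 * h + h.+1 by rewrite n_eq; lia.
rewrite size_eq in valid_cs.
exists m => //; exists (split_crossings h 5 cs); split => //.
- by rewrite n_eq; apply: split_crossings_valid.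
- exact: mk_trans (braid_eq_markov (braid_eq_split_crossings _ valid_cs)) markov_cs.
Qed.
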